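(* Let $p$ be an odd prime, $k$ algebraically closed of characteristic $p$, $d=p^2-1$, and let $X$ be the Artin–Schreier curve $y^p-y=-x^{d}-x^{d/2}$ over $k$. Let $k_0$ be an integer with $0\le k_0<\frac{p-1}{2}$ and $l$ an integer with $0\le l\le \frac{d(p/2-1-k_0)-p}{p}$. Then there exists $y^mx^ndx\in\mathcal B_X$ with $m<\frac{p-1}{2}$ such that the largest term of $\mathcal C_X(y^mx^ndx)$ is $y^{k_0}x^ldx$.
   Context: $\mathcal C_X$ is the Cartier operator on $H^0(X,\Omega^1_X)$: the $p^{-1}$-semilinear map with $\mathcal C_X(f^p\alpha+\beta)=f\,\mathcal C_X(\alpha)+\mathcal C_X(\beta)$, $\mathcal C_X(x^{p-1}dx)=dx$, $\mathcal C_X(x^ndx)=0$ for $n\not\equiv-1\pmod p$. For an Artin–Schreier curve $y^p-y=f$ with $f\in k[x]$ of degree $D$ prime to $p$, the set $$\mathcal B_X=\left\{y^ix^jdx:\ 0\le i\le p-2,\ 0\le j\le \left\lceil\tfrac{(p-i-1)D}{p}\right\rceil-2\right\}$$ is a $k$-basis of $H^0(X,\Omega^1_X)$. Order $\mathcal B_X$ lexicographically with $y>x$: $y^ix^jdx>y^ax^bdx$ iff $i>a$, or $i=a$ and $j>b$. The ''largest term'' of a nonzero differential $\omega\in H^0(X,\Omega^1_X)$ is the largest element of $\mathcal B_X$ appearing with nonzero coefficient when $\omega$ is written in the basis $\mathcal B_X$. *)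

From HB Require Import structures.
From mathcomp Require Import all_boot all_order all_algebra.
Set Implicit Arguments. Unset Strict Implicit. Unset Printing Implicit Defensive.
Import Order.TTheory GRing.Theory Num.Theory.
Local Open Scope ring_scope.

(* Convention: the function field K of X is a field containing k (via iota);
   a meromorphic differential  g dx  is represented by g : K  (dx generates
   the 1-dimensional K-space of differentials since x is separating). *)

Definition ceil_divn (a b : nat) : nat := ((a + b.-1) %/ b)%N.

(* (i,j) indexes an element y^i x^j dx of the basis B_X,
   for the curve y^p - y = f with deg f = D:
   0 <= i <= p-2, 0 <= j <= ceil((p-i-1)D/p) - 2. *)
Definition inBX (p D i j : nat) : bool :=
  [&& (i + 2 <= p)%N & (j + 2 <= ceil_divn ((p - i - 1) * D) p)%N].

(* lexicographic order with y > x : y^i x^j dx > y^a x^b dx *)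
Definition lex_gt (i j a b : nat) : bool :=
  ((a < i)%N || ((i == a) && (b < j)%N)).

Definition largest_term (k : fieldType) (K : fieldType)
  (iota : {rmorphism k -> K}) (p D : nat) (x y w : K) (a b : nat) : Prop :=
  exists c : nat -> nat -> k,
    [/\ forall i j, ~~ inBX p D i j -> c i j = 0,
        w = \sum_(i < p) \sum_(j < D) iota (c i j) * y ^+ i * x ^+ j,
        inBX p D a b, c a b != 0
      & forall i j, lex_gt i j a b -> c i j = 0].

Definition is_cartier (K : fieldType) (p : nat) (x : K) (C : K -> K) : Prop :=
  [/\ forall f al be : K, C (f ^+ p * al + be) = f * C al + C be,
      C (x ^+ p.-1) = 1
    & forall n : nat, (n %% p != p.-1)%N -> C (x ^+ n) = 0].

From HB Require Import structures.
From mathcomp Require Import all_boot all_order all_algebra.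
From mathcomp Require Import zify ring lra.
Import Order.TTheory GRing.Theory Num.Theory.
Local Open Scope ring_scope.

Set Implicit Arguments. Unset Strict Implicit. Unset Printing Implicit Defensive.

(* Since p is odd, y = y^p + x^e + x^(2e) with e = (p^2 - 1)/2.  Expanding y^m x^n
   trinomially and applying the Cartier operator gives
     C (y^m x^n) = sum_(i,t) C(m,i) C(m-i,t) y^i C (x^(n + e (m - i + t))),
   where C (x^N) is x^(N/p) if N = -1 (mod p) and 0 otherwise.  Take N = l p + p - 1,
   write N = n + e v with n < e and put m = k0 + ceil(v/2).  As p does not divide e and
   all the multipliers m - i + t stay below p, a term survives only if m - i + t = v:
   its x-exponent is then exactly l and i <= k0, and for i = k0 there is a single
   term, with coefficient C(m,k0) C(m-k0,t) prime to p.  The bound on l keeps these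
   monomials in B_X and m below (p-1)/2. *)

Section CartierOperator.
Variables (K : fieldType) (p : nat) (x : K) (C : K -> K).
Hypothesis hC : is_cartier p x C.

Lemma cartierD a b : C (a + b) = C a + C b.
Proof. by case: hC => hlin _ _; have := hlin 1 a b; rewrite expr1n !mul1r. Qed.

Lemma cartier0 : C 0 = 0.
Proof. by apply: (addrI (C 0)); rewrite -cartierD !addr0. Qed.

Lemma cartier_sum (I : Type) (r : seq I) (P : pred I) (F : I -> K) :
  C (\sum_(i <- r | P i) F i) = \sum_(i <- r | P i) C (F i).
Proof. exact: (big_morph C cartierD cartier0). Qed.

Lemma cartierMn a n : C (a *+ n) = C a *+ n.
Proof. by elim: n => [|n IHn]; rewrite ?mulr0n ?cartier0 // !mulrS cartierD IHn. Qed.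

Lemma cartier_frobenius b a : C (b ^+ p * a) = b * C a.
Proof. by case: hC => hlin _ _; rewrite -[_ * a]addr0 hlin cartier0 addr0. Qed.

Lemma cartierXn N : C (x ^+ N) = if (N %% p == p.-1)%N then x ^+ (N %/ p) else 0.
Proof.
case: hC => _ hpred hzero.
rewrite {1}(divn_eq N p) exprD exprM cartier_frobenius.
case: ifP => [/eqP-> | hN]; first by rewrite hpred mulr1.
by rewrite hzero ?mulr0 // modn_mod hN.
Qed.

End CartierOperator.

Lemma prime_ndvdn_fact p m : prime p -> (m < p)%N -> ~~ (p %| m`!)%N.
Proof.
move=> p_pr; elim: m => [|m IHm] ltmp; first by rewrite dvdn1 neq_ltn prime_gt1 ?orbT.
rewrite factS Euclid_dvdM // negb_or IHm 1?ltnW // andbT.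
by apply: contraL ltmp => /(dvdn_leq (ltn0Sn _)); rewrite -leqNgt.
Qed.

Lemma prime_ndvdn_bin p m i : prime p -> (m < p)%N -> (i <= m)%N ->
  ~~ (p %| 'C(m, i))%N.
Proof.
move=> p_pr ltmp lemi; apply: contra (prime_ndvdn_fact p_pr ltmp) => dvd_bin.
by rewrite -(bin_fact lemi) dvdn_mulr.
Qed.

Lemma inBXE p D i j : (0 < p)%N ->
  inBX p D i j = (i + 2 <= p)%N && ((j + 2) * p <= (p - i - 1) * D + p.-1)%N.
Proof. by move=> p_gt0; rewrite /inBX /ceil_divn leq_divRL. Qed.

Lemma inBX_le p D i a b : (0 < p)%N -> (i <= a)%N -> inBX p D a b -> inBX p D i b.
Proof.
move=> p_gt0 leia; rewrite !inBXE // => /andP[lea hb]; apply/andP; split; first lia.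
by apply: (leq_trans hb); rewrite leq_add2r leq_mul2r leq_sub2r ?leq_sub2l ?orbT.
Qed.

Lemma inBX_ltD p D a b : (0 < p)%N -> inBX p D a b -> (b < D)%N.
Proof.
move=> p_gt0; rewrite inBXE // => /andP[_ hb].
have : ((p - a - 1) * D <= p * D)%N by apply: leq_mul; lia.
rewrite -(ltn_pmul2r p_gt0); nia.
Qed.

Lemma largest_term_column (k K : fieldType) (iota : {rmorphism k -> K})
    (p D : nat) (x y : K) (c : nat -> nat) (a b : nat) :
    p \in [pchar k] -> inBX p D a b -> ~~ (p %| c a)%N ->
    (forall i, (a < i)%N -> c i = 0%N) ->
  largest_term iota p D x y (\sum_(i < p) (y ^+ i * x ^+ b) *+ c i) a b.
Proof.
move=> pchar_p hab ndvd_ca c_gt.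
have p_gt0 := prime_gt0 (pcharf_prime pchar_p).
have ltbD := inBX_ltD p_gt0 hab.
exists (fun i j => if (i <= a)%N && (j == b) then (c i)%:R else 0); split.
- move=> i j; case: ifP => // /andP[leia /eqP->] /negP[].
  exact: inBX_le leia hab.
- apply: eq_bigr => i _; rewrite (bigD1 (Ordinal ltbD)) //= big1 ?addr0; last first.
    move=> j /negbTE nejb; have -> : (j == b :> nat) = false by rewrite -nejb.
    by rewrite andbF rmorph0 !mul0r.
  rewrite eqxx andbT; case: leqP => [_ | ltai]; last by rewrite c_gt // rmorph0 !mul0r.
  by rewrite rmorph_nat mulr_natl mulrnAl.
- exact: hab.
- by rewrite leqnn eqxx -(dvdn_pcharf pchar_p).
- move=> i j; rewrite /lex_gt => /orP[ltai | /andP[/eqP-> ltbj]].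
    by rewrite leqNgt ltai.
  by rewrite (gtn_eqF ltbj) andbF.
Qed.

(* The x-degree of (y^p)^i (x^e)^(m-i-t) (x^(2e))^t x^n in (y^p + x^e + x^(2e))^m x^n. *)
Definition expansion_xdeg (e m n i t : nat) : nat := (n + e * (m - i + t))%N.

Definition cartier_weight (p e m n i t : nat) : nat :=
  ('C(m, i) * 'C(m - i, t) * (expansion_xdeg e m n i t %% p == p.-1))%N.

Lemma modn_mull_inj p e a b : prime p -> ~~ (p %| e)%N -> (a < p)%N -> (b < p)%N ->
  (e * a == e * b %[mod p])%N -> a = b.
Proof.
move=> p_pr ndvd_e.
wlog leab : a b / (a <= b)%N.
  move=> hwlog ltap ltbp; case: (leqP a b) => [|/ltnW] hab; first exact: hwlog.
  by rewrite eq_sym => hcongr; symmetry; apply: hwlog.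
move=> ltap ltbp.
rewrite eq_sym eqn_mod_dvd ?leq_mul2l ?leab ?orbT // -mulnBr Euclid_dvdM //.
rewrite (negbTE ndvd_e) /= => dvd_ba.
have [ba0 | ba_gt0] := posnP (b - a); first lia.
have := dvdn_leq ba_gt0 dvd_ba; lia.
Qed.

Lemma expansion_xdeg_congr p e m n k0 t0 i t :
    prime p -> ~~ (p %| e)%N -> (2 * m < p)%N -> (k0 + t0 <= m <= k0 + t0.+1)%N ->
    (i <= m)%N -> (t <= m - i)%N ->
    (expansion_xdeg e m n i t == expansion_xdeg e m n k0 t0 %[mod p])%N ->
  [/\ expansion_xdeg e m n i t = expansion_xdeg e m n k0 t0,
      (i <= k0)%N & (i = k0 -> t = t0)].
Proof.
move=> p_pr ndvd_e lt2mp /andP[let0 gtt0] leim leti.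
rewrite /expansion_xdeg eqn_modDl => /modn_mull_inj eqdeg.
have {}eqdeg : (m - i + t = m - k0 + t0)%N by apply: eqdeg => //; lia.
by rewrite eqdeg; split=> //; lia.
Qed.

Lemma exists_monomial_exponents p e k0 l :
    odd p -> (0 < e)%N -> (l * p + p + 2 * e * k0.+1 <= e * p)%N ->
  exists m n t0, [/\ (2 * m + 3 <= p)%N, inBX p (2 * e) m n,
    (k0 + t0 <= m <= k0 + t0.+1)%N, expansion_xdeg e m n k0 t0 = (l * p + p.-1)%N
    & inBX p (2 * e) k0 l].
Proof.
move=> odd_p e_gt0 hbound.
have p_gt0 : (0 < p)%N by case: p odd_p hbound.
set L := (l * p + p.-1)%N; set v := (L %/ e)%N; set s := uphalf v.
have hL : L = (L %% e + e * v)%N by rewrite {1}(divn_eq L e) addnC mulnC.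
have ltLe : (L %% e < e)%N by rewrite ltn_pmod.
have hv : (v + 3 + 2 * k0 <= p)%N.
  have : (e * (v + 2 + 2 * k0) < e * p)%N by rewrite !mulnDr; lia.
  by rewrite ltn_pmul2l //; lia.
have hs : (v <= 2 * s <= v.+1)%N by rewrite /s; have := uphalfK v; case: (odd v); lia.
have hp : p = (p./2.*2).+1 by rewrite -[LHS]odd_double_half odd_p.
exists (k0 + s)%N, (L %% e)%N, (v - s)%N; split.
- lia.
- rewrite inBXE //; apply/andP; split; first lia.
  have : ((L %% e + 2) * p <= (e + 1) * p)%N by rewrite leq_mul2r; lia.
  have : ((p + 1) * e <= (2 * (p - (k0 + s) - 1)) * e)%N by rewrite leq_mul2r; lia.
  set P := (p - (k0 + s) - 1)%N; lia.
- lia.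
- by rewrite /expansion_xdeg (_ : (k0 + s - k0 + (v - s) = v)%N) -?hL //; lia.
- rewrite inBXE //; apply/andP; split; first lia.
  have : ((p - k0 - 1) * e + k0.+1 * e = p * e)%N by rewrite -mulnDl; congr (_ * _); lia.
  set Q := (p - k0 - 1)%N; lia.
Qed.

Lemma exprDn_widen (R : comNzRingType) (a b : R) m B : (m < B)%N ->
  (a + b) ^+ m = \sum_(i < B) (a ^+ (m - i) * b ^+ i) *+ 'C(m, i).
Proof.
move=> ltmB; rewrite exprDn.
rewrite (big_ord_widen B (fun i => (a ^+ (m - i) * b ^+ i) *+ 'C(m, i)) ltmB) big_mkcond.
apply: eq_bigr => i _; case: ltnP => // ltmi.
by rewrite bin_small ?mulr0n.
Qed.

Section ArtinSchreierCurve.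
Variables (k K : fieldType) (iota : {rmorphism k -> K}).
Variables (p e : nat) (x y : K) (C : K -> K).
Hypotheses (pchar_p : p \in [pchar k]) (ndvd_e : ~~ (p %| e)%N).
Hypothesis hC : is_cartier p x C.
Hypothesis hy : y = y ^+ p + x ^+ e + x ^+ (2 * e).

Lemma monomial_expansion m n : (m < p)%N ->
  y ^+ m * x ^+ n = \sum_(i < p) \sum_(t < p)
    ((y ^+ i) ^+ p * x ^+ expansion_xdeg e m n i t) *+ ('C(m, i) * 'C(m - i, t)).
Proof.
move=> ltmp.
rewrite {1}hy -addrA addrC (exprDn_widen _ _ ltmp) big_distrl; apply: eq_bigr => i _ /=.
rewrite (exprDn_widen _ _ (leq_ltn_trans (leq_subr i m) ltmp)).
rewrite mulrnAl big_distrl big_distrl -sumrMnl; apply: eq_bigr => t _ /=.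
have [leti | ltit] := leqP t (m - i).
  2: by rewrite !(bin_small ltit) muln0 !mulr0n !mul0r mul0rn.
have -> : x ^+ expansion_xdeg e m n i t =
    x ^+ e ^+ (m - i - t) * x ^+ (2 * e) ^+ t * x ^+ n.
  by rewrite -!exprM -!exprD /expansion_xdeg; congr (_ ^+ _); nia.
by rewrite !mulrnAl -mulrnA mulnC exprAC; congr (_ *+ _); ring.
Qed.

Lemma cartier_monomial m n : (m < p)%N ->
  C (y ^+ m * x ^+ n) = \sum_(i < p) \sum_(t < p)
    (y ^+ i * x ^+ (expansion_xdeg e m n i t %/ p)) *+ cartier_weight p e m n i t.
Proof.
move=> ltmp; rewrite monomial_expansion // (cartier_sum hC); apply: eq_bigr => i _.
rewrite (cartier_sum hC); apply: eq_bigr => t _.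
rewrite (cartierMn hC) (cartier_frobenius hC) (cartierXn hC) /cartier_weight.
by case: (_ == _); rewrite /= ?muln1 ?muln0 ?mulr0 ?mulr0n ?mul0rn.
Qed.

Lemma cartier_monomial_largest_term m n k0 t0 l D :
    (2 * m < p)%N -> (k0 + t0 <= m <= k0 + t0.+1)%N ->
    expansion_xdeg e m n k0 t0 = (l * p + p.-1)%N -> inBX p D k0 l ->
  largest_term iota p D x y (C (y ^+ m * x ^+ n)) k0 l.
Proof.
move=> lt2mp ht0 hdeg hk0l.
have p_pr := pcharf_prime pchar_p; have p_gt0 := prime_gt0 p_pr.
have Lmod : ((l * p + p.-1) %% p = p.-1)%N by rewrite modnMDl modn_small // ltn_predL.
have Ldiv : ((l * p + p.-1) %/ p = l)%N by rewrite divnMDl // divn_small ?addn0 // ltn_predL.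
have support i t : cartier_weight p e m n i t != 0%N ->
    [/\ expansion_xdeg e m n i t = (l * p + p.-1)%N, (i <= k0)%N & (i = k0 -> t = t0)].
  rewrite /cartier_weight !muln_eq0 !negb_or -!lt0n !bin_gt0 lt0b.
  move=> /andP[/andP[leim leti] hmod].
  rewrite -hdeg; apply: (expansion_xdeg_congr p_pr ndvd_e lt2mp ht0 leim leti).
  by rewrite hdeg Lmod (eqP hmod).
rewrite cartier_monomial; last lia.
pose c i := (\sum_(t < p) cartier_weight p e m n i t)%N.
rewrite (eq_bigr (fun i : 'I_p => (y ^+ i * x ^+ l) *+ c i)); last first.
  move=> i _; rewrite -sumrMnr; apply: eq_bigr => t _.
  have [-> | /support[-> _ _]] := eqVneq (cartier_weight p e m n i t) 0%N.
    by rewrite !mulr0n.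
  by rewrite Ldiv.
apply: (@largest_term_column _ _ iota p D x y c) => //.
  have ltt0p : (t0 < p)%N by lia.
  rewrite /c (bigD1 (Ordinal ltt0p)) //= big1 ?addn0; last first.
    move=> t net0.
    have [// | /support[_ _ /(_ erefl) ht]] := eqVneq (cartier_weight p e m n k0 t) 0%N.
    by case/eqP: net0; apply: val_inj.
  rewrite /cartier_weight hdeg Lmod eqxx muln1 Euclid_dvdM // negb_or.
  by rewrite !prime_ndvdn_bin //; lia.
move=> i ltk0i; apply: big1 => t _.
by have [// | /support[_ ? _]] := eqVneq (cartier_weight p e m n i t) 0%N; lia.
Qed.

End ArtinSchreierCurve.

Theorem mainTheorem8
  (p : nat) (hp : prime p) (hodd : odd p)
  (k : closedFieldType) (hchar : p \in [pchar k])
  (K : fieldType) (iota : {rmorphism k -> K})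
  (x y : K)
  (hcurve : y ^+ p - y = - x ^+ (p ^ 2 - 1) - x ^+ ((p ^ 2 - 1) %/ 2))
  (hindep : forall c : nat -> nat -> k,
      \sum_(i < p) \sum_(j < p ^ 2 - 1) iota (c i j) * y ^+ i * x ^+ j = 0 ->
      forall i j, (i < p)%N -> (j < p ^ 2 - 1)%N -> c i j = 0)
  (C : K -> K) (hC : is_cartier p x C)
  (k0 l : nat) (hk0 : (2 * k0 < p - 1)%N)
  (hl : (l%:Q <= (((p ^ 2 - 1)%N)%:Q * (p%:Q / 2 - 1 - k0%:Q) - p%:Q) / p%:Q)) :
  exists m n : nat,
    [/\ inBX p (p ^ 2 - 1) m n, (2 * m < p - 1)%N
      & largest_term iota p (p ^ 2 - 1) x y (C (y ^+ m * x ^+ n)) k0 l].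
Proof.
set d := (p ^ 2 - 1)%N in hcurve hl *; set e := (d %/ 2)%N in hcurve.
have hd : d = (2 * e)%N.
  by rewrite /e divn2 mul2n even_halfK // /d oddB ?expn_gt0 ?prime_gt0 // oddX hodd.
have hy : y = y ^+ p + x ^+ e + x ^+ (2 * e).
  by transitivity (y ^+ p - (y ^+ p - y)); [ring | rewrite hcurve -hd; ring].
have ndvd_e : ~~ (p %| e)%N.
  apply/negP => /(dvdn_mull 2); rewrite -hd.
  move=> /(dvdn_sub (dvdn_exp (ltn0Sn 1) (dvdnn p))).
  by rewrite subKn ?expn_gt0 ?prime_gt0 // dvdn1 => /eqP p1; rewrite p1 in hp.
have e_gt0 : (0 < e)%N by rewrite lt0n; apply: contraNneq ndvd_e => ->.
have hbound : (l * p + p + 2 * e * k0.+1 <= e * p)%N.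
  have de : (d%:R : rat) = 2 * e%:R by rewrite hd natrM.
  move: hl; rewrite -!pmulrn ler_pdivlMr ?ltr0n ?prime_gt0 // => hl.
  by rewrite -(ler_nat rat) -[k0.+1]addn1 !natrD !natrM natrD; rewrite de in hl; lra.
have [m [n [t0 [hm hmn ht0 hdeg hk0l]]]] := exists_monomial_exponents hodd e_gt0 hbound.
exists m, n; rewrite hd; split=> //; first lia.
by apply: (cartier_monomial_largest_term iota hchar ndvd_e hC hy _ ht0 hdeg hk0l); lia.
Qed.
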